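(* Let $\mathcal{R}$ be the universal $R$-matrix of $U_q(\mathfrak{su}_2)$, $\mu=q^{2H}$, and $Q=(q-q^{-1})^2FE+q^{2H+1}+q^{-2H-1}$. Then $$\mathrm{Tr}_1^{(1/2)}\big(\mathcal{R}_{21}\mathcal{R}_{31}\mathcal{R}_{13}\mathcal{R}_{12}(\mu\otimes1\otimes1)\big)=\Delta(Q),$$ where $\mathrm{Tr}_1^{(1/2)}$ means representing the first tensor factor in the spin-$1/2$ representation and tracing over it.
   Context: $q$ generic complex, $U_q(\mathfrak{su}_2)$ generated by $E,F,q^H$ with $q^HE=qEq^H$, $q^HF=q^{-1}Fq^H$, $[E,F]=[2H]_q$, $[x]_q=(q^x-q^{-x})/(q-q^{-1})$; coproduct $\Delta(E)=E\otimes q^{-H}+q^H\otimes E$, $\Delta(F)=F\otimes q^{-H}+q^H\otimes F$, $\Delta(q^H)=q^H\otimes q^H$. $\mathcal{R}=\sum_{k\ge0}\frac{(q-q^{-1})^k}{[k]_q!}q^{-k(k+1)/2}(F\otimes E)^k(q^{kH}\otimes q^{-kH})q^{2(H\otimes H)}=\mathcal{R}^\alpha\otimes\mathcal{R}_\alpha$; leg notation: $\mathcal{R}_{12}=\mathcal{R}^\alpha\otimes\mathcal{R}_\alpha\otimes1$, $\mathcal{R}_{13}=\mathcal{R}^\alpha\otimes1\otimes\mathcal{R}_\alpha$, $\mathcal{R}_{21}=\mathcal{R}_\alpha\otimes\mathcal{R}^\alpha\otimes1$, $\mathcal{R}_{31}=\mathcal{R}_\alpha\otimes1\otimes\mathcal{R}^\alpha$.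 Spin-$1/2$ representation: basis $|1/2,\pm1/2\rangle$ with $E|1/2,m\rangle=[1/2-m]_q|1/2,m+1\rangle$, $F|1/2,m\rangle=[1/2+m]_q|1/2,m-1\rangle$, $H|1/2,m\rangle=m|1/2,m\rangle$. Equalities are understood as operators on tensor products of finite-dimensional spin representations. *)

From mathcomp Require Import all_boot all_order all_algebra all_field.
Set Implicit Arguments.
Unset Strict Implicit.
Unset Printing Implicit Defensive.
Import Order.TTheory GRing.Theory Num.Theory.
Local Open Scope ring_scope.

(* We parametrize by s = q^(1/2) (q = s^2), so that all the
   half-integer powers q^x appearing (q^(kH), q^(2 H (x) H), [x]_q with x
   half-integral) are integer powers of s.
   Spin j = n/2 representation V_n : basis indexed by i : 'I_n.+1,
   the i-th basis vector being |j, m> with m = j - i, so 2m = n - 2i. *)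

(* 2m for the basis vector i of spin n/2 *)
Definition wt (n : nat) (i : 'I_n.+1) : int := n%:Z - 2 * (i : nat)%:Z.

(* qbr s t = [t/2]_q = (q^(t/2) - q^(-t/2)) / (q - q^-1),  q = s^2 *)
Definition qbr (s : algC) (t : int) : algC :=
  (s ^ t - s ^ (- t)) / (s ^ 2 - s ^ (-2)).

(* Matrices (column convention: A a b = coefficient of e_a in A e_b). *)
(* E |j,m> = [j-m]_q |j,m+1>  (j - m = b) *)
Definition Emx (s : algC) (n : nat) : 'M[algC]_n.+1 :=
  \matrix_(a, b) (if (a : nat).+1 == b then qbr s (2 * (b : nat)%:Z) else 0).
(* F |j,m> = [j+m]_q |j,m-1>  (j + m = n - b) *)
Definition Fmx (s : algC) (n : nat) : 'M[algC]_n.+1 :=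
  \matrix_(a, b) (if (a : nat) == (b : nat).+1
                  then qbr s (2 * (n%:Z - (b : nat)%:Z)) else 0).
(* q^(k H) |j,m> = q^(k m) |j,m> = s^(k * 2m) |j,m> *)
Definition qkH (s : algC) (n : nat) (k : int) : 'M[algC]_n.+1 :=
  \matrix_(a, b) (if a == b then s ^ (k * wt a) else 0).

Definition op (T : finType) := T -> T -> algC.
Definition opmul (T : finType) (A B : op T) : op T :=
  fun x z => \sum_(y : T) A x y * B y z.
Definition opadd (T : finType) (A B : op T) : op T := fun x y => A x y + B x y.
Definition opscale (T : finType) (c : algC) (A : op T) : op T :=
  fun x y => c * A x y.

Definition T3 (n1 n2 n3 : nat) : finType :=
  ('I_n1.+1 * 'I_n2.+1 * 'I_n3.+1)%type.
Definition T2 (n2 n3 : nat) : finType := ('I_n2.+1 * 'I_n3.+1)%type.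

Definition tens3 n1 n2 n3 (A : 'M[algC]_n1.+1) (B : 'M[algC]_n2.+1)
  (C : 'M[algC]_n3.+1) : op (T3 n1 n2 n3) :=
  fun x y => A x.1.1 y.1.1 * B x.1.2 y.1.2 * C x.2 y.2.
Definition tens2 n2 n3 (A : 'M[algC]_n2.+1) (B : 'M[algC]_n3.+1)
  : op (T2 n2 n3) :=
  fun x y => A x.1 y.1 * B x.2 y.2.

(* coefficient of the k-th term of the universal R-matrix:
   (q - q^-1)^k / [k]_q! * q^(-k(k+1)/2) *)
Definition qfact (s : algC) (k : nat) : algC :=
  \prod_(1 <= i < k.+1) qbr s (2 * i%:Z).
Definition Rcoef (s : algC) (k : nat) : algC :=
  (s ^ 2 - s ^ (-2)) ^+ k / qfact s k * s ^ (- (k%:Z * k.+1%:Z)).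

(* R^alpha-part and R_alpha-part of the k-th term:
   X_k = F^k q^(kH),  Y_k = E^k q^(-kH);  R = sum_k c_k (X_k (x) Y_k) q^(2 H(x)H) *)
Definition Xk (s : algC) (n : nat) (k : nat) : 'M[algC]_n.+1 :=
  Fmx s n ^+ k *m qkH s n k%:Z.
Definition Yk (s : algC) (n : nat) (k : nat) : 'M[algC]_n.+1 :=
  Emx s n ^+ k *m qkH s n (- k%:Z).

Inductive pos := P1 | P2 | P3.

Definition place2 n1 n2 n3 (p r : pos)
  (A : forall n, 'M[algC]_n.+1) (B : forall n, 'M[algC]_n.+1)
  : op (T3 n1 n2 n3) :=
  match p, r with
  | P1, P2 => tens3 (A n1) (B n2) 1%:M
  | P2, P1 => tens3 (B n1) (A n2) 1%:M
  | P1, P3 => tens3 (A n1) 1%:M (B n3)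
  | P3, P1 => tens3 (B n1) 1%:M (A n3)
  | P2, P3 => tens3 1%:M (A n2) (B n3)
  | P3, P2 => tens3 1%:M (B n2) (A n3)
  | _, _ => fun _ _ => 0
  end.

Definition wt3 n1 n2 n3 (p : pos) (x : T3 n1 n2 n3) : int :=
  match p with P1 => wt x.1.1 | P2 => wt x.1.2 | P3 => wt x.2 end.

(* q^(2 H_p H_r):  eigenvalue q^(2 m_p m_r) = s^((2 m_p)(2 m_r)) *)
Definition qHH n1 n2 n3 (s : algC) (p r : pos) : op (T3 n1 n2 n3) :=
  fun x y => if x == y then s ^ (wt3 p x * wt3 r x) else 0.

(* Leg notation R_{pr}: R^alpha in leg p, R_alpha in leg r.  The series is a
   finite sum on finite-dimensional representations (F^k = 0 on V_n for
   k > n), so truncating at k <= n1+n2+n3 gives exactly its action. *)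
Definition Rleg (s : algC) n1 n2 n3 (p r : pos) : op (T3 n1 n2 n3) :=
  opmul (fun x y => \sum_(k < (n1 + n2 + n3).+1)
           Rcoef s k * @place2 n1 n2 n3 p r (fun n => Xk s n k)
                                            (fun n => Yk s n k) x y)
        (@qHH n1 n2 n3 s p r).

Definition ptrace1 n1 n2 n3 (A : op (T3 n1 n2 n3)) : op (T2 n2 n3) :=
  fun x y => \sum_(a : 'I_n1.+1) A (a, x.1, x.2) (a, y.1, y.2).

Definition trace_RRRR_mu (s : algC) (n2 n3 : nat) : op (T2 n2 n3) :=
  ptrace1 (opmul (opmul (opmul (opmul
    (@Rleg s 1 n2 n3 P2 P1) (@Rleg s 1 n2 n3 P3 P1))
    (@Rleg s 1 n2 n3 P1 P3)) (@Rleg s 1 n2 n3 P1 P2))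
    (tens3 (qkH s 1 2) 1%:M 1%:M)).

Definition DeltaE (s : algC) n2 n3 : op (T2 n2 n3) :=
  opadd (tens2 (Emx s n2) (qkH s n3 (-1))) (tens2 (qkH s n2 1) (Emx s n3)).
Definition DeltaF (s : algC) n2 n3 : op (T2 n2 n3) :=
  opadd (tens2 (Fmx s n2) (qkH s n3 (-1))) (tens2 (qkH s n2 1) (Fmx s n3)).
Definition DeltaqkH (s : algC) n2 n3 (k : int) : op (T2 n2 n3) :=
  tens2 (qkH s n2 k) (qkH s n3 k).

(* Delta(Q),  Q = (q-q^-1)^2 F E + q^(2H+1) + q^(-2H-1),
   with q^(2H+1) = q * q^(2H), q = s^2 *)
Definition DeltaQ (s : algC) n2 n3 : op (T2 n2 n3) :=
  opadd (opadd
    (opscale ((s ^ 2 - s ^ (-2)) ^+ 2) (opmul (@DeltaF s n2 n3) (@DeltaE s n2 n3)))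
    (opscale (s ^ 2) (@DeltaqkH s n2 n3 2)))
    (opscale (s ^ (-2)) (@DeltaqkH s n2 n3 (-2))).

From mathcomp Require Import all_boot all_order all_algebra all_field ring.
From Stdlib Require Import FunctionalExtensionality.
Import GRing.Theory Num.Theory.
Local Open Scope ring_scope.

(* With the first factor in the spin-1/2 representation, E and F square to zero there, so each
   R-matrix leg involving it is a 2x2 block-triangular matrix (basis |1/2,1/2>, |1/2,-1/2>) with
   entries operators on the other two factors.  With K = q^H and c = (q - q^-1) q^(-1/2),
     R21 R31 = [[ΔK, c ΔF], [0, ΔK^-1]]   and   R13 R12 = [[ΔK, 0], [c ΔE, ΔK^-1]],
   so tracing against mu = diag(q, q^-1) gives q (ΔK^2 + c^2 ΔF ΔE) + q^-1 ΔK^-2, which is Δ(Q)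
   because q c^2 = (q - q^-1)^2. *)

Lemma sum_pair (V : nmodType) (I J : finType) (F : I * J -> V) :
  \sum_z F z = \sum_i \sum_j F (i, j).
Proof. by rewrite pair_bigA; apply: eq_bigr => -[]. Qed.

Section OperatorAlgebra.
Variable T : finType.
Implicit Types (A B C : op T) (c : algC).

Definition op0 : op T := fun _ _ => 0.
Definition op1 : op T := fun x y => (x == y)%:R.

Lemma op_ext A B : (forall x y, A x y = B x y) -> A = B.
Proof. by move=> eqAB; do 2 apply: functional_extensionality => ?. Qed.

Lemma opmulA A B C : opmul A (opmul B C) = opmul (opmul A B) C.
Proof.
apply: op_ext => x w; rewrite /opmul.
transitivity (\sum_y \sum_z A x y * B y z * C z w).
  by apply: eq_bigr => y _; rewrite big_distrr /=; apply: eq_bigr => z _; rewrite mulrA.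
by rewrite exchange_big; apply: eq_bigr => z _; rewrite big_distrl.
Qed.

Lemma opmulZl c A B : opmul (opscale c A) B = opscale c (opmul A B).
Proof.
by apply: op_ext => x y; rewrite /opmul /opscale mulr_sumr; apply: eq_bigr => z _; rewrite mulrA.
Qed.

Lemma opmulZr c A B : opmul A (opscale c B) = opscale c (opmul A B).
Proof.
by apply: op_ext => x y; rewrite /opmul /opscale mulr_sumr; apply: eq_bigr => z _; rewrite mulrCA.
Qed.

Lemma opmul0l A : opmul op0 A = op0.
Proof. by apply: op_ext => x y; rewrite /opmul /op0 big1 // => z _; rewrite mul0r. Qed.

Lemma opmul0r A : opmul A op0 = op0.
Proof. by apply: op_ext => x y; rewrite /opmul /op0 big1 // => z _; rewrite mulr0. Qed.

Lemma opmul1r A : opmul A op1 = A.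
Proof.
apply: op_ext => x y; rewrite /opmul (bigD1 y) //= /op1 eqxx mulr1 big1 ?addr0 //.
by move=> z /negPf; rewrite eq_sym => ->; rewrite mulr0.
Qed.

Lemma opaddC A B : opadd A B = opadd B A.
Proof. by apply: op_ext => x y; rewrite /opadd addrC. Qed.

Lemma opscaleDr c A B : opscale c (opadd A B) = opadd (opscale c A) (opscale c B).
Proof. by apply: op_ext => x y; rewrite /opscale /opadd mulrDr. Qed.

Lemma opadd0l A : opadd op0 A = A.
Proof. by apply: op_ext => x y; rewrite /opadd /op0 add0r. Qed.

Lemma opadd0r A : opadd A op0 = A.
Proof. by apply: op_ext => x y; rewrite /opadd /op0 addr0. Qed.

End OperatorAlgebra.
Arguments op0 {T}.
Arguments op1 {T}.

Section Tensors.
Variables n2 n3 : nat.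
Implicit Types (A C : 'M[algC]_n2.+1) (B D : 'M[algC]_n3.+1).

Lemma opmul_tens2 A B C D : opmul (tens2 A B) (tens2 C D) = tens2 (A *m C) (B *m D).
Proof.
apply: op_ext => -[i2 i3] [j2 j3]; rewrite /opmul /tens2 sum_pair /= !mxE big_distrl.
apply: eq_bigr => k2 _; rewrite big_distrr; apply: eq_bigr => k3 _ /=.
by rewrite mulrACA.
Qed.

Lemma tens2_1 : tens2 (1%:M : 'M[algC]_n2.+1) (1%:M : 'M[algC]_n3.+1) = op1.
Proof.
apply: op_ext => -[i2 i3] [j2 j3]; rewrite /tens2 /op1 !mxE /= xpair_eqE.
by case: (i2 == j2); rewrite ?mul1r ?mul0r.
Qed.

End Tensors.

Section Blocks.
Variables n2 n3 : nat.
Local Notation W := (op (T2 n2 n3)).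

Definition blk (b00 b01 b10 b11 : W) : op (T3 1 n2 n3) :=
  fun x y => (if x.1.1 == ord0 then if y.1.1 == ord0 then b00 else b01
              else if y.1.1 == ord0 then b10 else b11) (x.1.2, x.2) (y.1.2, y.2).

Lemma sum_T3_spin_half (F : T3 1 n2 n3 -> algC) :
  \sum_z F z = \sum_(w : T2 n2 n3) (F (ord0, w.1, w.2) + F (ord_max, w.1, w.2)).
Proof.
rewrite /T3 /T2 !sum_pair big_ord_recl big_ord1.
have -> : lift ord0 ord0 = ord_max :> 'I_2 by apply: val_inj.
by rewrite -big_split; apply: eq_bigr => i2 _; rewrite -big_split.
Qed.

Lemma blk_mul a00 a01 a10 a11 b00 b01 b10 b11 :
  opmul (blk a00 a01 a10 a11) (blk b00 b01 b10 b11) =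
  blk (opadd (opmul a00 b00) (opmul a01 b10)) (opadd (opmul a00 b01) (opmul a01 b11))
      (opadd (opmul a10 b00) (opmul a11 b10)) (opadd (opmul a10 b01) (opmul a11 b11)).
Proof.
apply: op_ext => -[[a i2] i3] [[b j2] j3].
rewrite /opmul sum_T3_spin_half /opadd /opmul big_split /=.
case: a b => [[|[]] //= ?] [[|[]] //= ?].
all: by congr (_ + _); apply: eq_bigr => -[].
Qed.

Lemma ptrace1_blk b00 b01 b10 b11 : ptrace1 (blk b00 b01 b10 b11) = opadd b00 b11.
Proof. by apply: op_ext => -[i2 i3] [j2 j3]; rewrite /ptrace1 big_ord_recl big_ord1. Qed.

End Blocks.
Arguments blk {n2 n3}.

Lemma opmul_qHH n1 n2 n3 s p r (A : op (T3 n1 n2 n3)) x y :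
  opmul A (qHH s p r) x y = A x y * s ^ (wt3 p y * wt3 r y).
Proof.
rewrite /opmul /qHH (bigD1 y) //= eqxx big1 ?addr0 // => z /negPf ->.
by rewrite mulr0.
Qed.

Lemma wt_ord0_half (h : (0 < 2)%N) : wt (Ordinal h) = 1.
Proof. by []. Qed.

Lemma wt_ord1_half (h : (1 < 2)%N) : wt (Ordinal h) = -1.
Proof. by []. Qed.

Section Weights.
Variable s : algC.

Lemma mul_mx_qkH n k (A : 'M[algC]_n.+1) i j : (A *m qkH s n k) i j = A i j * s ^ (k * wt j).
Proof.
rewrite mxE (bigD1 j) //= mxE eqxx big1 ?addr0 // => l /negPf neq_lj.
by rewrite mxE neq_lj mulr0.
Qed.

Lemma qkHE n k i j : qkH s n k i j = (i == j)%:R * s ^ (k * wt j).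
Proof. by rewrite mxE; case: eqP => [->|_]; rewrite ?mul1r ?mul0r. Qed.

Lemma qkH0 n : qkH s n 0 = 1%:M.
Proof. by apply/matrixP => i j; rewrite qkHE mul0r expr0z mulr1 mxE. Qed.

Lemma Xk0 n : Xk s n 0 = 1%:M.
Proof. by rewrite /Xk expr0 qkH0 mulmx1. Qed.

Lemma Yk0 n : Yk s n 0 = 1%:M.
Proof. by rewrite /Yk expr0 oppr0 qkH0 mulmx1. Qed.

Lemma Xk1E n i j : Xk s n 1 i j = Fmx s n i j * s ^ wt j.
Proof. by rewrite mul_mx_qkH mul1r. Qed.

Lemma Yk1E n i j : Yk s n 1 i j = Emx s n i j * s ^ (- wt j).
Proof. by rewrite mul_mx_qkH mulN1r. Qed.

Lemma Rcoef0 : Rcoef s 0 = 1.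
Proof. by rewrite /Rcoef /qfact big_geq // expr0 mul0r oppr0 expr0z divr1 mul1r. Qed.

Hypothesis s_neq0 : s != 0.

Lemma qkH_mul n k l : qkH s n k *m qkH s n l = qkH s n (k + l).
Proof.
apply/matrixP => i j; rewrite mul_mx_qkH !mxE.
by case: eqP => [->|_]; rewrite ?mul0r // mulrDl expfzDr.
Qed.

End Weights.

Section SpinHalf.
Variable s : algC.

Lemma Fmx_half : Fmx s 1 = qbr s 2 *: delta_mx 1 0.
Proof. by apply/matrixP => -[[|[|//]] ?] [[|[|//]] ?]; rewrite !mxE /= ?mulr0 ?mulr1. Qed.

Lemma Emx_half : Emx s 1 = qbr s 2 *: delta_mx 0 1.
Proof. by apply/matrixP => -[[|[|//]] ?] [[|[|//]] ?]; rewrite !mxE /= ?mulr0 ?mulr1. Qed.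

Lemma Fmx_half_sqr : Fmx s 1 ^+ 2 = 0.
Proof. by rewrite expr2 Fmx_half -scalerAl -scalerAr -mulmxE mul_delta_mx_0 ?scaler0. Qed.

Lemma Emx_half_sqr : Emx s 1 ^+ 2 = 0.
Proof. by rewrite expr2 Emx_half -scalerAl -scalerAr -mulmxE mul_delta_mx_0 ?scaler0. Qed.

Lemma Xk_half_vanish k : (1 < k)%N -> Xk s 1 k = 0.
Proof. by move=> lt1k; rewrite /Xk -(subnK lt1k) exprD Fmx_half_sqr mulr0 mul0mx. Qed.

Lemma Yk_half_vanish k : (1 < k)%N -> Yk s 1 k = 0.
Proof. by move=> lt1k; rewrite /Yk -(subnK lt1k) exprD Emx_half_sqr mulr0 mul0mx. Qed.

Lemma Rleg_spin_half n2 n3 p r : p = P1 \/ r = P1 ->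
  @Rleg s 1 n2 n3 p r = fun x y =>
  (place2 p r (Xk s ^~ 0) (Yk s ^~ 0) x y
   + Rcoef s 1 * place2 p r (Xk s ^~ 1) (Yk s ^~ 1) x y) * s ^ (wt3 p y * wt3 r y).
Proof.
move=> legP1; apply: op_ext => x y.
rewrite /Rleg opmul_qHH big_ord_recl big_ord_recl big1 ?addr0 ?Rcoef0 ?mul1r //= => k _.
apply/eqP; rewrite mulf_eq0; apply/orP; right.
by case: legP1 => ->; [case: r | case: p];
  rewrite /= /tens3 ?Xk_half_vanish ?Yk_half_vanish // mxE ?mul0r ?mulr0.
Qed.

Hypothesis s_neq0 : s != 0.
Hypothesis qdiff_neq0 : s ^ 2 - s ^ (-2) != 0.

Lemma qbr2 : qbr s 2 = 1.
Proof. exact: divff. Qed.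

Lemma Xk_half : Xk s 1 1 = s *: delta_mx 1 0.
Proof.
apply/matrixP => i j; rewrite Xk1E Fmx_half qbr2 scale1r !mxE mulrC.
by case: j => -[|[|//]] ?; rewrite ?wt_ord0_half ?expr1z // andbF !mulr0.
Qed.

Lemma Yk_half : Yk s 1 1 = s *: delta_mx 0 1.
Proof.
apply/matrixP => i j; rewrite Yk1E Emx_half qbr2 scale1r !mxE mulrC.
by case: j => -[|[|//]] ?; rewrite ?wt_ord1_half ?opprK ?expr1z // andbF !mulr0.
Qed.

Lemma Rcoef1 : Rcoef s 1 = (s ^ 2 - s ^ (-2)) * s ^ (-2).
Proof. by rewrite /Rcoef /qfact big_nat1 expr1 qbr2 divr1. Qed.

Variables n2 n3 : nat.
Local Notation I2 := (1%:M : 'M[algC]_n2.+1).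
Local Notation I3 := (1%:M : 'M[algC]_n3.+1).

Local Ltac blk_by_entries :=
  rewrite Rleg_spin_half; last by [left | right];
  apply: op_ext => -[[[[|[|//]] ?] ?] ?] [[[[|[|//]] ?] ?] ?];
  rewrite /= Xk0 Yk0 ?Xk_half ?Yk_half /tens3 /blk /tens2 /opscale /op0 /=;
  rewrite ?Xk1E ?Yk1E ?qkHE;
  (* keep mxE from unfolding the entries of E and F *)
  move: (Fmx s n2) (Fmx s n3) (Emx s n2) (Emx s n3) => F2 F3 E2 E3;
  rewrite !mxE /= ?wt_ord0_half ?wt_ord1_half ?mulr1 ?mul1r ?mulrN1 ?mulN1r -?invr_expz;
  by field; rewrite ?expfz_neq0.

Lemma Rleg21_blk : @Rleg s 1 n2 n3 P2 P1 =
  blk (tens2 (qkH s n2 1) I3) (opscale (Rcoef s 1 * s) (tens2 (Fmx s n2) I3))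
      op0 (tens2 (qkH s n2 (-1)) I3).
Proof. blk_by_entries. Qed.

Lemma Rleg31_blk : @Rleg s 1 n2 n3 P3 P1 =
  blk (tens2 I2 (qkH s n3 1)) (opscale (Rcoef s 1 * s) (tens2 I2 (Fmx s n3)))
      op0 (tens2 I2 (qkH s n3 (-1))).
Proof. blk_by_entries. Qed.

Lemma Rleg13_blk : @Rleg s 1 n2 n3 P1 P3 =
  blk (tens2 I2 (qkH s n3 1)) op0
      (opscale (Rcoef s 1 * s) (tens2 I2 (Emx s n3))) (tens2 I2 (qkH s n3 (-1))).
Proof. blk_by_entries. Qed.

Lemma Rleg12_blk : @Rleg s 1 n2 n3 P1 P2 =
  blk (tens2 (qkH s n2 1) I3) op0
      (opscale (Rcoef s 1 * s) (tens2 (Emx s n2) I3)) (tens2 (qkH s n2 (-1)) I3).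
Proof. blk_by_entries. Qed.

Lemma mu_blk : tens3 (qkH s 1 2) I2 I3 =
  blk (opscale (s ^ 2) op1) op0 op0 (opscale (s ^ (-2)) op1).
Proof.
rewrite -tens2_1; apply: op_ext => -[[[[|[|//]] ?] ?] ?] [[[[|[|//]] ?] ?] ?].
all: by rewrite /tens3 /blk /tens2 /opscale /op0 qkHE /= ?wt_ord0_half ?wt_ord1_half
  ?mul0r ?mul1r ?mulr1 ?mulrN1 ?mulrA.
Qed.

Lemma DeltaqkH_mul k l :
  opmul (@DeltaqkH s n2 n3 k) (@DeltaqkH s n2 n3 l) = @DeltaqkH s n2 n3 (k + l).
Proof. by rewrite opmul_tens2 !qkH_mul. Qed.

Lemma Rleg21_Rleg31 : opmul (@Rleg s 1 n2 n3 P2 P1) (@Rleg s 1 n2 n3 P3 P1) =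
  blk (@DeltaqkH s n2 n3 1) (opscale (Rcoef s 1 * s) (@DeltaF s n2 n3))
      op0 (@DeltaqkH s n2 n3 (-1)).
Proof.
rewrite Rleg21_blk Rleg31_blk blk_mul.
rewrite !(opmul0l, opmul0r, opadd0l, opadd0r, opmulZl, opmulZr, opmul_tens2, mulmx1, mul1mx).
by rewrite /DeltaF opscaleDr opaddC.
Qed.

Lemma Rleg13_Rleg12 : opmul (@Rleg s 1 n2 n3 P1 P3) (@Rleg s 1 n2 n3 P1 P2) =
  blk (@DeltaqkH s n2 n3 1) op0
      (opscale (Rcoef s 1 * s) (@DeltaE s n2 n3)) (@DeltaqkH s n2 n3 (-1)).
Proof.
rewrite Rleg13_blk Rleg12_blk blk_mul.
rewrite !(opmul0l, opmul0r, opadd0l, opadd0r, opmulZl, opmulZr, opmul_tens2, mulmx1, mul1mx).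
by rewrite /DeltaE opscaleDr opaddC.
Qed.

End SpinHalf.

Lemma subr_expz2N_neq0 (s : algC) : s != 0 -> s ^+ 4 != 1 -> s ^ 2 - s ^ (-2) != 0.
Proof.
move=> s_neq0; apply: contra; rewrite subr_eq0 => /eqP eq_s2.
have -> : s ^+ 4 = s ^ 2 * s ^ 2 by rewrite -expfzDr.
by rewrite {2}eq_s2 -expfzDr // addrN expr0z.
Qed.

Theorem corollary5p5 (s : algC) (hs0 : s != 0)
  (hgen : forall k : nat, (0 < k)%N -> s ^+ k != 1)
  (n2 n3 : nat) (x y : T2 n2 n3) :
  @trace_RRRR_mu s n2 n3 x y = @DeltaQ s n2 n3 x y.
Proof.
have qdiff := @subr_expz2N_neq0 s hs0 (hgen 4%N isT).
rewrite /trace_RRRR_mu -[X in opmul X _]opmulA Rleg21_Rleg31 // Rleg13_Rleg12 //.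
rewrite mu_blk !blk_mul ptrace1_blk.
rewrite !(opmul0l, opmul0r, opadd0l, opadd0r, opmulZl, opmulZr, opmul1r, DeltaqkH_mul) //.
rewrite /DeltaQ /opadd /opscale Rcoef1 // (_ : 1 + 1 = 2) // (_ : -1 - 1 = -2) //.
by rewrite -invr_expz; field.
Qed.
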